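(* Let $(Y_n)$ satisfy Condition 1 and let $X_n$ be the number of rounds of the associated leader election process. Then $\mathbb E X_n<\infty$ for every $n$, $\mathbb E X_{n+1}-\mathbb E X_n=O(1/n)$, and $d_W(X_n,X_m)=O\bigl(|n-m|/(n\wedge m)\bigr)$ uniformly in $n,m\ge1$.
   Context: Condition 1: $(Y_n)_{n\ge1}$ is a sequence of random variables with $1\le Y_n\le n$ for all $n$ and $\Pr(Y_n=n)<1$ for $n\ge2$ (so $Y_1=1$), such that: (i) $\Pr(Y_n\le k)\ge\Pr(Y_{n+1}\le k)$ for all $n,k\ge1$; (ii) there are constants $\alpha\in(0,1)$, $\varepsilon>0$ and a sequence $\delta_n=O((\log n)^{-1-\varepsilon})$ with $\mathbb E Y_{n+1}-\mathbb E Y_n=\alpha+O(\delta_n)$; (iii) for such $\varepsilon,\delta_n$, $\Pr(|Y_n-\alpha n|>\delta_n n)=O(n^{-2-\varepsilon})$. (Here $\log 1$ is interpreted as a fixed positive number.) Leader election process: $X_1=0$ and $X_n\overset{d}{=}X_{Y_n}+1$ for $n\ge2$, with $Y_n$ independent of $(X_i)_{i\le n}$; i.e. $X_n$ is the number of steps to absorption at $1$ of the Markov chain started at $n$ with transition probabilities $P(i,j)=\Pr(Y_i=j)$. $d_W$ denotes the Wasserstein distance $d_W(X,Y)=\inf\mathbb E|X'-Y'|$ over couplings of the laws of $X$ and $Y$. *)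

From Stdlib Require Export Reals.
Open Scope R_scope.

(* The law of Y_n is encoded by p n k = Pr(Y_n = k).
   reach p t i = Pr(chain started at i is at state 1 at time t),
   for the Markov chain with transition P(i,j) = p i j. *)
Fixpoint reach (p : nat -> nat -> R) (t i : nat) : R :=
  match t with
  | O => if Nat.eqb i 1 then 1 else 0
  | S t' => sum_f_R0 (fun k => p i k * reach p t' k) i
  end.

(* pmf of X_n = absorption time at 1 of the chain started at n:
   Pr(X_n = t) = Pr(X_n <= t) - Pr(X_n <= t-1), since 1 is absorbing. *)
Definition pmfX (p : nat -> nat -> R) (n t : nat) : R :=
  match t with
  | O => reach p 0 n
  | S t' => reach p (S t') n - reach p t' n
  end.

Definition cdfY (p : nat -> nat -> R) (n k : nat) : R := sum_f_R0 (p n) k.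

Definition EY (p : nat -> nat -> R) (n : nat) : R :=
  sum_f_R0 (fun k => INR k * p n k) n.

Definition devY (p : nat -> nat -> R) (alpha dn : R) (n : nat) : R :=
  sum_f_R0 (fun k => if Rlt_dec (dn * INR n) (Rabs (INR k - alpha * INR n))
                     then p n k else 0) n.

Definition coupling (mu nu : nat -> R) (pi : nat -> nat -> R) : Prop :=
  (forall i j, 0 <= pi i j) /\
  (forall i, infinite_sum (fun j => pi i j) (mu i)) /\
  (forall j, infinite_sum (fun i => pi i j) (nu j)).

(* d_W(mu,nu) <= B, where d_W = inf over couplings of E|X'-Y'|;
   the (nonnegative) double series is bounded via its finite square partial sums. *)
Definition wass_le (mu nu : nat -> R) (B : R) : Prop :=
  forall eta, 0 < eta ->
    exists pi, coupling mu nu pi /\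
      forall N, sum_f_R0 (fun i => sum_f_R0 (fun j => pi i j * Rabs (INR i - INR j)) N) N
                <= B + eta.

(* The number X_n of rounds of the leader election process driven by
   p n k = Pr(Y_n = k) is the absorption time at 1 of the chain with
   transitions P(i,j) = p i j; we work with its survival function
   surv t i = Pr(X_i > t) and the partial means pmean T i = sum_(t<T) surv t i.

   1. Geometric tails: every state i >= 2 is left with probability bounded
      away from 0, so surv t i <= 2^n lam^t for i <= n and some lam < 1;
      hence X_n is a.s. finite and pmean T n increases to E X_n.
   2. Stochastic monotonicity (i) makes surv t i nondecreasing in i, and
      summation by parts turns first-step analysis into the recursion
        dmean (T+1) n = sum_k w n k * dmean T k   (n >= 2)
      for the increments dmean T n = pmean T (n+1) - pmean T n, with weights
      w n k = Pr(Y_n <= k) - Pr(Y_(n+1) <= k) >= 0 of total mass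
      E Y_(n+1) - E Y_n.  By (ii) this mass is alpha + O(delta_n), by (iii)
      the weights concentrate on k in [alpha n, beta n], beta = (1+alpha)/2.
      A strong induction on n, with the comparison function
      phi x = 1 - K1 (ln x)^(-eps) - a x^(-eps) absorbing the errors, gives
      the key estimate  n * dmean T n <= K  for all n >= 1 and all T.
   3. Letting T -> oo gives 0 <= E X_(n+1) - E X_n <= K / n.  The quantile
      coupling of X_n and X_m costs at most sum_t |surv t m - surv t n|,
      which for n <= m telescopes to E X_m - E X_n <= K (m - n) / n. *)

From Stdlib Require Import Reals Lra Lia Arith ClassicalEpsilon.
Open Scope R_scope.

(* psum f n = f 0 + ... + f (n-1): the half-open indexing makes the
   recursions below (first-step analysis, summation by parts) uniform. *)
Fixpoint psum (f : nat -> R) (n : nat) : R :=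
  match n with O => 0 | S n' => psum f n' + f n' end.

Lemma psum_S f n : psum f (S n) = psum f n + f n.
Proof. reflexivity. Qed.

Lemma sum_f_R0_psum f n : sum_f_R0 f n = psum f (S n).
Proof. induction n; simpl in *; [ring | rewrite IHn; ring]. Qed.

Lemma psum_ext f g n : (forall k, (k < n)%nat -> f k = g k) -> psum f n = psum g n.
Proof. induction n; intros H; simpl; auto. rewrite IHn, H; auto. Qed.

Lemma psum_le f g n : (forall k, (k < n)%nat -> f k <= g k) -> psum f n <= psum g n.
Proof. induction n; intros H; simpl; [lra |]. apply Rplus_le_compat; auto. Qed.

Lemma psum_plus f g n : psum (fun k => f k + g k) n = psum f n + psum g n.
Proof. induction n; simpl; [ring | rewrite IHn; ring]. Qed.

Lemma psum_minus f g n : psum (fun k => f k - g k) n = psum f n - psum g n.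
Proof. induction n; simpl; [ring | rewrite IHn; ring]. Qed.

Lemma psum_scal c f n : psum (fun k => c * f k) n = c * psum f n.
Proof. induction n; simpl; [ring | rewrite IHn; ring]. Qed.

Lemma psum_const c n : psum (fun _ => c) n = INR n * c.
Proof. induction n; simpl psum; [simpl; ring | rewrite IHn, S_INR; ring]. Qed.

Lemma psum_nonneg f n : (forall k, (k < n)%nat -> 0 <= f k) -> 0 <= psum f n.
Proof.
  intros H. replace 0 with (psum (fun _ => 0) n) by (rewrite psum_const; ring).
  apply psum_le; auto.
Qed.

Lemma psum_mono f m n : (forall k, 0 <= f k) -> (m <= n)%nat -> psum f m <= psum f n.
Proof. intros H Hmn. induction Hmn; [lra |]. simpl. specialize (H m0). lra. Qed.

Lemma psum_exchange f n m :
  psum (fun i => psum (fun j => f i j) m) n = psum (fun j => psum (fun i => f i j) n) m.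
Proof.
  induction n; simpl.
  - rewrite psum_const; simpl; ring.
  - rewrite IHn, <- psum_plus. reflexivity.
Qed.

Lemma psum_tail_le f g k N : (k <= N)%nat -> (forall j, 0 <= g j) ->
  (forall j, (k <= j < N)%nat -> f j <= g j) -> psum f N - psum f k <= psum g N.
Proof.
  intros HkN Hg H. replace N with (k + (N - k))%nat in * by lia.
  generalize (N - k)%nat H; clear H HkN N. intros d H. induction d.
  - rewrite Nat.add_0_r. assert (0 <= psum g k) by (apply psum_nonneg; auto). lra.
  - rewrite Nat.add_succ_r. simpl.
    assert (f (k + d)%nat <= g (k + d)%nat) by (apply H; lia).
    assert (psum f (k + d) - psum f k <= psum g (k + d)) by (apply IHd; intros; apply H; lia).
    lra.
Qed.

Lemma psum_by_parts q g m : psum (fun k => q k * g k) (S m) =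
  psum q (S m) * g m - psum (fun k => psum q (S k) * (g (S k) - g k)) m.
Proof.
  induction m; simpl in *; [ring |]. rewrite IHm. simpl. ring.
Qed.

Lemma psum_weighted_le (w f : nat -> R) X E K N : 0 <= X -> 0 <= E -> 0 <= K ->
  (forall k, (k < N)%nat ->
     w k = 0 \/ (0 <= w k /\ 0 <= f k <= K /\ (w k <= E \/ f k <= X))) ->
  psum (fun k => w k * f k) N <= X * psum w N + INR N * (E * K).
Proof.
  intros HX HE HK H. rewrite <- psum_scal, <- psum_const, <- psum_plus.
  apply psum_le. intros k Hk. destruct (H k Hk) as [Hw | [Hw [[Hf0 HfK] [Hs | Hs]]]].
  - rewrite Hw. nra.
  - assert (w k * f k <= E * K) by (apply Rmult_le_compat; lra). nra.
  - assert (w k * f k <= w k * X) by (apply Rmult_le_compat_l; lra). nra.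
Qed.

Lemma psum_geom x T : 0 <= x < 1 -> psum (fun t => x ^ t) T <= 1 / (1 - x).
Proof.
  intros Hx. assert (E : psum (fun t => x ^ t) T * (1 - x) = 1 - x ^ T).
  { induction T; simpl; [ring |]. rewrite Rmult_plus_distr_r, IHT. ring. }
  assert (0 <= x ^ T) by (apply pow_le; lra).
  apply (Rmult_le_reg_r (1 - x)); [lra |]. rewrite E.
  unfold Rdiv. rewrite Rmult_1_l, Rinv_l; lra.
Qed.

Lemma squeeze_0 a b c : (forall N, 0 <= a N <= c * b N) -> Un_cv b 0 -> Un_cv a 0.
Proof.
  intros H Hb eps He. set (c' := Rabs c + 1).
  assert (Hc' : 0 < c') by (unfold c'; pose proof (Rabs_pos c); lra).
  destruct (Hb (eps / c')) as [N HN]; [apply Rdiv_lt_0_compat; lra |].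
  exists N. intros n Hn. specialize (HN n Hn). specialize (H n).
  unfold R_dist in *. rewrite Rminus_0_r in *. rewrite Rabs_right by lra.
  assert (c * b n <= c' * Rabs (b n)).
  { apply Rle_trans with (Rabs (c * b n)); [apply RRle_abs |]. rewrite Rabs_mult.
    apply Rmult_le_compat_r; [apply Rabs_pos | unfold c'; lra]. }
  assert (c' * Rabs (b n) < c' * (eps / c')) by (apply Rmult_lt_compat_l; auto).
  replace (c' * (eps / c')) with eps in * by (field; lra). lra.
Qed.

Lemma Un_cv_const c : Un_cv (fun _ => c) c.
Proof. intros e He. exists 0%nat. intros. unfold R_dist. rewrite Rminus_diag_eq, Rabs_R0; auto. Qed.

Lemma pow_cv_0 lam : 0 <= lam < 1 -> Un_cv (fun t => lam ^ t) 0.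
Proof.
  intros Hl eps He. destruct (pow_lt_1_zero lam) with eps as [N HN];
    [rewrite Rabs_right; lra | auto |].
  exists N. intros n Hn. unfold R_dist. rewrite Rminus_0_r. auto.
Qed.

(* t mu^t is bounded, since mu^t <= mu^s for every s < t. *)
Lemma INR_mul_pow_le mu t : 0 <= mu < 1 -> INR t * mu ^ t <= 1 / (1 - mu).
Proof.
  intros Hmu. rewrite <- psum_const. eapply Rle_trans; [| apply (psum_geom mu t Hmu)].
  apply psum_le. intros s Hs. replace t with (s + (t - s))%nat by lia. rewrite pow_add.
  assert (mu ^ (t - s) <= 1) by (rewrite <- (pow1 (t - s)); apply pow_incr; lra).
  pose proof (pow_le mu s (proj1 Hmu)). nra.
Qed.

(* Hence t lam^t -> 0, writing lam <= mu^2 with mu = (1 + lam) / 2. *)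
Lemma INR_mul_pow_cv_0 lam : 0 <= lam < 1 -> Un_cv (fun t => INR t * lam ^ t) 0.
Proof.
  intros Hl. set (mu := (1 + lam) / 2). assert (Hmu : 0 <= mu < 1) by (unfold mu; lra).
  apply squeeze_0 with (b := fun t => mu ^ t) (c := 1 / (1 - mu)); [| apply pow_cv_0; auto].
  intros t. pose proof (pos_INR t). pose proof (pow_le lam t (proj1 Hl)).
  pose proof (pow_le mu t (proj1 Hmu)). split; [nra |].
  assert (lam ^ t <= mu ^ t * mu ^ t).
  { rewrite <- Rpow_mult_distr. apply pow_incr. unfold mu. nra. }
  pose proof (INR_mul_pow_le mu t Hmu). nra.
Qed.

Lemma Ropp_le_abs x : - x <= Rabs x.
Proof. rewrite <- Rabs_Ropp. apply Rle_abs. Qed.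

Lemma ln_nonneg x : 1 <= x -> 0 <= ln x.
Proof.
  intros. destruct (Req_dec x 1) as [-> | ]; [rewrite ln_1; lra |].
  rewrite <- ln_1. apply Rlt_le, ln_increasing; lra.
Qed.

Lemma ln_pos x : 1 < x -> 0 < ln x.
Proof. intros. rewrite <- ln_1. apply ln_increasing; lra. Qed.

Lemma ln_neg x : 0 < x < 1 -> ln x < 0.
Proof. intros. rewrite <- ln_1. apply ln_increasing; lra. Qed.

Lemma ln_le x y : 0 < x -> x <= y -> ln x <= ln y.
Proof.
  intros. destruct (Req_dec x y) as [-> | ]; [lra |]. apply Rlt_le, ln_increasing; lra.
Qed.

Lemma ln_diff_ge x y : 0 < x -> 0 < y -> ln y - ln x >= (y - x) / y.
Proof.
  intros Hx Hy. pose proof (exp_ineq1_le (ln x - ln y)) as H.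
  unfold Rminus in H. rewrite exp_plus, exp_Ropp, !exp_ln in H by auto.
  apply Rle_ge. replace ((y - x) / y) with (1 - x * / y) by (field; lra). lra.
Qed.

Lemma Rpower_pos x y : 0 < Rpower x y.
Proof. apply exp_pos. Qed.

Lemma Rpower_opp_anti x y s : 0 < x -> x <= y -> 0 <= s -> Rpower y (- s) <= Rpower x (- s).
Proof.
  intros. rewrite !Rpower_Ropp. apply Rinv_le_contravar; [apply Rpower_pos |].
  apply Rle_Rpower_l; lra.
Qed.

Lemma Rpower_opp_le_1 x s : 1 <= x -> 0 <= s -> Rpower x (- s) <= 1.
Proof.
  intros. apply Rle_trans with (Rpower 1 (- s)); [apply Rpower_opp_anti; lra |].
  unfold Rpower. rewrite ln_1, Rmult_0_r, exp_0. lra.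
Qed.

Lemma Rpower_opp_gt_1 b e : 0 < b < 1 -> 0 < e -> 1 < Rpower b (- e).
Proof.
  intros. unfold Rpower. rewrite <- exp_0. apply exp_increasing.
  pose proof (ln_neg b H). nra.
Qed.

Lemma Rpower_opp_le_inv_ln x s : 1 <= x -> 0 < s -> Rpower x (- s) <= 1 / (1 + s * ln x).
Proof.
  intros Hx Hs. pose proof (ln_nonneg x Hx). pose proof (exp_ineq1_le (s * ln x)).
  rewrite Rpower_Ropp. unfold Rdiv. rewrite Rmult_1_l.
  apply Rinv_le_contravar; [nra | unfold Rpower; lra].
Qed.

Lemma Rpower_minus_1 v : 0 < v -> Rpower v (-1) = / v.
Proof. intros. replace (-1) with (- (1)) by ring. rewrite Rpower_Ropp, Rpower_1; auto. Qed.

(* Convexity of u |-> u^(-s): the secant is steeper than the tangent at v. *)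
Lemma Rpower_opp_convex u v s : 0 < u -> u < v -> 0 < s ->
  Rpower u (- s) - Rpower v (- s) >= s * (v - u) * Rpower v (- s - 1).
Proof.
  intros Hu Huv Hs. unfold Rminus at 3. rewrite Rpower_plus, Rpower_minus_1 by lra.
  assert (E : Rpower u (- s) = Rpower v (- s) * exp (s * (ln v - ln u))).
  { unfold Rpower. rewrite <- exp_plus. f_equal. ring. }
  rewrite E. pose proof (exp_ineq1_le (s * (ln v - ln u))).
  pose proof (ln_diff_ge u v Hu ltac:(lra)). pose proof (Rpower_pos v (- s)).
  assert (s * (ln v - ln u) >= s * ((v - u) / v)) by (apply Rle_ge, Rmult_le_compat_l; lra).
  assert (Rpower v (- s) * exp (s * (ln v - ln u)) >= Rpower v (- s) * (1 + s * ((v - u) / v)))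
    by (apply Rle_ge, Rmult_le_compat_l; lra).
  unfold Rdiv in *. nra.
Qed.

Lemma Rpower_minus_2 x e : 0 < x -> Rpower x (-2 - e) = Rpower x (- e) / (x * x).
Proof.
  intros. replace (-2 - e) with (- INR 2 + - e) by (simpl; ring).
  rewrite Rpower_plus, Rpower_Ropp, Rpower_pow by auto. simpl. field. lra.
Qed.

Definition eventually (P : nat -> Prop) := exists N, forall n, (N <= n)%nat -> P n.

Lemma eventually_and P Q : eventually P -> eventually Q -> eventually (fun n => P n /\ Q n).
Proof.
  intros [N1 H1] [N2 H2]. exists (Nat.max N1 N2). intros n Hn. split; [apply H1 | apply H2]; lia.
Qed.

Lemma eventually_S P : eventually P -> eventually (fun n => P (S n)).
Proof. intros [N H]. exists N. intros; apply H; lia. Qed.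

Lemma eventually_ge N0 : eventually (fun n => (N0 <= n)%nat).
Proof. exists N0; auto. Qed.

Lemma eventually_INR_ge r : eventually (fun n => r <= INR n).
Proof.
  destruct (INR_unbounded r) as [N HN]. exists N. intros n Hn.
  assert (INR N <= INR n) by (apply le_INR; lia). lra.
Qed.

Lemma eventually_ln_ge r : eventually (fun n => r <= ln (INR n)).
Proof.
  destruct (eventually_INR_ge (exp r)) as [N HN]. exists N. intros n Hn.
  rewrite <- (ln_exp r). apply ln_le; [apply exp_pos | auto].
Qed.

Lemma eventually_small (delta : nat -> R) eps dd C N : 0 <= eps -> 0 < dd ->
  (forall n, (N <= n)%nat -> Rabs (delta n) <= C * Rpower (ln (INR n)) (-1 - eps)) ->
  eventually (fun n => Rabs (delta n) <= dd).
Proof.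
  intros He Hd H. destruct (eventually_ln_ge (Rmax 1 (Rabs C / dd))) as [N2 H2].
  exists (Nat.max N N2). intros n Hn. specialize (H n ltac:(lia)). specialize (H2 n ltac:(lia)).
  pose proof (Rmax_l 1 (Rabs C / dd)). pose proof (Rmax_r 1 (Rabs C / dd)).
  set (y := ln (INR n)) in *.
  assert (Hy : Rpower y (-1 - eps) <= / y).
  { replace (-1 - eps) with (-1 + - eps) by ring. rewrite Rpower_plus, Rpower_minus_1 by lra.
    pose proof (Rpower_opp_le_1 y eps ltac:(lra) He). pose proof (Rpower_pos y (- eps)).
    assert (0 < / y) by (apply Rinv_0_lt_compat; lra). nra. }
  pose proof (Rpower_pos y (-1 - eps)). pose proof (Rle_abs C).
  assert (Rabs C / dd * dd = Rabs C) by (field; lra).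
  assert (Rabs C * / y <= dd).
  { apply (Rmult_le_reg_r y); [lra |]. rewrite Rmult_assoc, Rinv_l by lra. nra. }
  assert (C * Rpower y (-1 - eps) <= Rabs C * / y).
  { apply Rle_trans with (Rabs C * Rpower y (-1 - eps)); [apply Rmult_le_compat_r; lra |].
    apply Rmult_le_compat_l; [apply Rabs_pos | auto]. }
  lra.
Qed.

Lemma bigO_nonneg_const (f g : nat -> R) :
  (forall n, 0 <= g n) -> (exists C N, forall n, (N <= n)%nat -> f n <= C * g n) ->
  exists C N, 0 <= C /\ forall n, (N <= n)%nat -> f n <= C * g n.
Proof.
  intros Hg [C [N H]]. exists (Rabs C), N. split; [apply Rabs_pos |]. intros n Hn.
  eapply Rle_trans; [apply H; auto |]. apply Rmult_le_compat_r; [auto | apply Rle_abs].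
Qed.

(** * The comparison function of the key estimate *)

(* The two correction terms are
   tuned to absorb the errors of conditions (ii) and (iii). *)
Definition phi (K1 a e x : R) : R := 1 - K1 * Rpower (ln x) (- e) - a * Rpower x (- e).

Section Comparison.

Variables K1 a e : R.
Hypotheses (HK1 : 0 <= K1) (Ha : 0 <= a) (He : 0 < e).

Lemma phi_le_1 x : phi K1 a e x <= 1.
Proof.
  unfold phi. pose proof (Rpower_pos (ln x) (- e)). pose proof (Rpower_pos x (- e)). nra.
Qed.

Lemma phi_mono x y : 1 < x -> x <= y -> phi K1 a e x <= phi K1 a e y.
Proof.
  intros Hx Hxy. unfold phi. pose proof (ln_pos x Hx).
  pose proof (Rpower_opp_anti (ln x) (ln y) e ltac:(lra) ltac:(apply ln_le; lra) ltac:(lra)).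
  pose proof (Rpower_opp_anti x y e ltac:(lra) Hxy ltac:(lra)).
  assert (K1 * Rpower (ln y) (- e) <= K1 * Rpower (ln x) (- e)) by (apply Rmult_le_compat_l; auto).
  assert (a * Rpower y (- e) <= a * Rpower x (- e)) by (apply Rmult_le_compat_l; auto).
  lra.
Qed.

Lemma phi_ge_half : exists n0 : nat, 2 <= INR n0 /\ 1 / 2 <= phi K1 a e (INR n0).
Proof.
  set (r := Rmax (Rmax 1 (exp (4 * K1 / e))) (4 * a / e)).
  destruct (eventually_and _ _ (eventually_ln_ge r) (eventually_INR_ge 2)) as [N HN].
  exists N. destruct (HN N (le_n N)) as [H1 H2]. split; auto.
  set (x := INR N) in *.
  pose proof (Rmax_l (Rmax 1 (exp (4 * K1 / e))) (4 * a / e)).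
  pose proof (Rmax_r (Rmax 1 (exp (4 * K1 / e))) (4 * a / e)).
  pose proof (Rmax_l 1 (exp (4 * K1 / e))). pose proof (Rmax_r 1 (exp (4 * K1 / e))).
  assert (Hl1 : 1 <= ln x) by (unfold r in *; lra).
  assert (Hll : 4 * K1 / e <= ln (ln x)).
  { rewrite <- (ln_exp (4 * K1 / e)). apply ln_le; [apply exp_pos | unfold r in *; lra]. }
  pose proof (Rpower_opp_le_inv_ln (ln x) e Hl1 He).
  pose proof (Rpower_opp_le_inv_ln x e ltac:(lra) He).
  pose proof (ln_nonneg (ln x) Hl1).
  assert (4 * K1 / e * e = 4 * K1) by (field; lra).
  assert (4 * a / e * e = 4 * a) by (field; lra).
  assert (B1 : 4 * K1 <= e * ln (ln x)) by nra.
  assert (B2 : 4 * a <= e * ln x) by (unfold r in *; nra).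
  assert (C1 : K1 * Rpower (ln x) (- e) <= 1 / 4).
  { apply Rle_trans with (K1 * (1 / (1 + e * ln (ln x)))); [apply Rmult_le_compat_l; auto |].
    unfold Rdiv. rewrite Rmult_1_l. apply (Rmult_le_reg_r (1 + e * ln (ln x))); [nra |].
    rewrite Rmult_assoc, Rinv_l by nra. nra. }
  assert (C2 : a * Rpower x (- e) <= 1 / 4).
  { apply Rle_trans with (a * (1 / (1 + e * ln x))); [apply Rmult_le_compat_l; auto |].
    unfold Rdiv. rewrite Rmult_1_l. apply (Rmult_le_reg_r (1 + e * ln x)); [nra |].
    rewrite Rmult_assoc, Rinv_l by nra. nra. }
  unfold phi. lra.
Qed.

(* Scaling the argument by b < 1 loses a definite amount, by convexity. *)
Lemma phi_gap b x : 0 < b < 1 -> 1 < b * x ->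
  phi K1 a e x - phi K1 a e (b * x) >=
  K1 * (e * (- ln b) * Rpower (ln x) (-1 - e)) + a * (Rpower b (- e) - 1) * Rpower x (- e).
Proof.
  intros Hb Hbx. assert (Hx : 0 < x) by nra.
  unfold phi. rewrite ln_mult by lra. rewrite <- Rpower_mult_distr by lra.
  pose proof (ln_neg b Hb). pose proof (ln_pos (b * x) Hbx) as Hl. rewrite ln_mult in Hl by lra.
  pose proof (Rpower_opp_convex (ln b + ln x) (ln x) e Hl ltac:(lra) He) as Hc.
  replace (ln x - (ln b + ln x)) with (- ln b) in Hc by ring.
  replace (- e - 1) with (-1 - e) in Hc by ring.
  assert (K1 * (Rpower (ln b + ln x) (- e) - Rpower (ln x) (- e)) >=
          K1 * (e * - ln b * Rpower (ln x) (-1 - e))) by (apply Rle_ge, Rmult_le_compat_l; lra).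
  lra.
Qed.

End Comparison.

(** * The quantile coupling of two laws on nat *)

Definition overlap (x y u v : R) : R := Rmax 0 (Rmin y v - Rmax x u).

Ltac overlap_cases :=
  unfold overlap, Rmax, Rmin in *;
  repeat match goal with
  | |- context [Rle_dec ?a ?b] => destruct (Rle_dec a b)
  | H : context [Rle_dec ?a ?b] |- _ => destruct (Rle_dec a b)
  end.

Lemma overlap_nonneg x y u v : 0 <= overlap x y u v.
Proof. overlap_cases; lra. Qed.

Lemma overlap_sym x y u v : overlap x y u v = overlap u v x y.
Proof. overlap_cases; lra. Qed.

Lemma overlap_split x y u v z : x <= y -> u <= v -> v <= z ->
  overlap x y u v + overlap x y v z = overlap x y u z.
Proof. intros. overlap_cases; lra. Qed.

Lemma overlap_lipschitz x y v v' : Rabs (overlap x y 0 v - overlap x y 0 v') <= Rabs (v - v').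
Proof.
  unfold Rabs. destruct (Rcase_abs (v - v')); destruct (Rcase_abs (overlap x y 0 v - overlap x y 0 v'));
    overlap_cases; lra.
Qed.

Definition indicator (b : bool) : R := if b then 1 else 0.

(* The quantile coupling pairs i and j with the mass of the overlap of
   [F_a(i-1), F_a(i)) and [F_b(j-1), F_b(j)), F the distribution functions. *)
Definition quantile_coupling (a b : nat -> R) (i j : nat) : R :=
  overlap (psum a i) (psum a (S i)) (psum b j) (psum b (S j)).

Lemma psum_step_le (c : nat -> R) : (forall k, 0 <= c k) -> forall j, psum c j <= psum c (S j).
Proof. intros Hc j. simpl. specialize (Hc j). lra. Qed.

Lemma psum_overlap (b : nat -> R) x y J : (forall k, 0 <= b k) ->
  psum (fun j => overlap x y (psum b j) (psum b (S j))) J = overlap x y 0 (psum b J).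
Proof.
  intros Hb. induction J; [simpl; overlap_cases; lra |].
  rewrite psum_S, IHJ. destruct (Rle_dec x y).
  - apply overlap_split; auto; [apply psum_nonneg; auto | apply psum_step_le; auto].
  - overlap_cases; lra.
Qed.

Lemma psum_le_total (c : nat -> R) : (forall k, 0 <= c k) -> infinite_sum c 1 -> forall n, psum c n <= 1.
Proof.
  intros Hc H [|n]; [simpl; lra |]. rewrite <- sum_f_R0_psum.
  apply (growing_ineq (sum_f_R0 c)); auto. intro m. simpl. specialize (Hc (S m)). lra.
Qed.

Lemma quantile_coupling_marginal (a b : nat -> R) i : (forall k, 0 <= a k) -> (forall k, 0 <= b k) ->
  infinite_sum a 1 -> infinite_sum b 1 -> infinite_sum (fun j => quantile_coupling a b i j) (a i).
Proof.
  intros Ha Hb Ia Ib e He. destruct (Ib e He) as [N HN]. exists N. intros J HJ.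
  specialize (HN J HJ). unfold R_dist in *. rewrite sum_f_R0_psum. unfold quantile_coupling.
  rewrite psum_overlap, <- (sum_f_R0_psum b J) by auto.
  replace (a i) with (overlap (psum a i) (psum a (S i)) 0 1).
  - eapply Rle_lt_trans; [apply overlap_lipschitz | auto].
  - pose proof (psum_nonneg a i (fun k _ => Ha k)). pose proof (psum_le_total a Ha Ia (S i)).
    pose proof (Ha i). rewrite psum_S in *. overlap_cases; lra.
Qed.

Lemma quantile_coupling_is_coupling (a b : nat -> R) : (forall k, 0 <= a k) -> (forall k, 0 <= b k) ->
  infinite_sum a 1 -> infinite_sum b 1 -> coupling a b (quantile_coupling a b).
Proof.
  intros Ha Hb Ia Ib. split; [intros; apply overlap_nonneg |]. split.
  - intros i. apply quantile_coupling_marginal; auto.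
  - intros j e He. destruct (quantile_coupling_marginal b a j Hb Ha Ib Ia e He) as [N HN].
    exists N. intros J HJ. specialize (HN J HJ).
    rewrite (sum_eq (fun i => quantile_coupling a b i j) (fun i => quantile_coupling b a j i)); auto.
    intros; apply overlap_sym.
Qed.

Lemma psum_indicator_le f t M : (t < M)%nat ->
  psum (fun i => indicator (i <=? t)%nat * f i) M = psum f (S t).
Proof.
  intros H. induction H.
  - rewrite !psum_S. unfold indicator at 2. rewrite Nat.leb_refl. f_equal; [| ring].
    apply psum_ext. intros k Hk. unfold indicator. destruct (Nat.leb_spec k t); [ring | lia].
  - rewrite psum_S, IHle. unfold indicator. destruct (Nat.leb_spec m t); [lia | ring].
Qed.

Lemma psum_indicator_gt_overlap (b : nat -> R) x y t N : (forall k, 0 <= b k) -> (t <= N)%nat -> x <= y ->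
  psum (fun j => indicator (t <? j)%nat * overlap x y (psum b j) (psum b (S j))) (S N) =
  overlap x y (psum b (S t)) (psum b (S N)).
Proof.
  intros Hb H Hxy. induction H.
  - replace (overlap x y (psum b (S t)) (psum b (S t))) with 0 by (overlap_cases; lra).
    replace 0 with (psum (fun _ => 0) (S t)) by (rewrite psum_const; ring). apply psum_ext.
    intros. unfold indicator. destruct (Nat.ltb_spec t k); [lia | ring].
  - rewrite psum_S, IHle. unfold indicator. destruct (Nat.ltb_spec t (S m)); [| lia].
    rewrite Rmult_1_l. apply overlap_split; auto.
    + apply (psum_mono b (S t) (S m)); auto; lia.
    + apply psum_step_le; auto.
Qed.

(* Under the quantile coupling, Pr(X' <= t < Y') <= (F_a(t) - F_b(t))^+. *)
Lemma coupling_cross_mass (a b : nat -> R) t N : (forall k, 0 <= a k) -> (forall k, 0 <= b k) -> (t < N)%nat ->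
  psum (fun i => psum (fun j => quantile_coupling a b i j *
    (indicator (i <=? t)%nat * indicator (t <? j)%nat)) (S N)) (S N)
  <= Rmax 0 (psum a (S t) - psum b (S t)).
Proof.
  intros Ha Hb Ht.
  rewrite (psum_ext _ (fun i => indicator (i <=? t)%nat *
    overlap (psum a i) (psum a (S i)) (psum b (S t)) (psum b (S N)))).
  2:{ intros i Hi.
      rewrite <- (psum_indicator_gt_overlap b _ _ t N Hb ltac:(lia) (psum_step_le a Ha i)).
      rewrite <- psum_scal. apply psum_ext. intros. unfold quantile_coupling. ring. }
  rewrite psum_indicator_le by lia.
  rewrite (psum_ext _ (fun i => overlap (psum b (S t)) (psum b (S N)) (psum a i) (psum a (S i))))
    by (intros; apply overlap_sym).
  rewrite psum_overlap, overlap_sym by auto. overlap_cases; lra.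
Qed.

Lemma psum_count i j N :
  psum (fun t => indicator (i <=? t)%nat * indicator (t <? j)%nat) N = INR (Nat.min j N - i).
Proof.
  induction N; [simpl; rewrite Nat.min_0_r; reflexivity |].
  rewrite psum_S, IHN. unfold indicator.
  destruct (Nat.leb_spec i N); destruct (Nat.ltb_spec N j).
  - replace (Nat.min j (S N) - i)%nat with (S (Nat.min j N - i)) by lia. rewrite S_INR. ring.
  - replace (Nat.min j (S N) - i)%nat with (Nat.min j N - i)%nat by lia. ring.
  - replace (Nat.min j (S N) - i)%nat with (Nat.min j N - i)%nat by lia. ring.
  - replace (Nat.min j (S N) - i)%nat with (Nat.min j N - i)%nat by lia. ring.
Qed.

Lemma abs_diff_count i j N : (i <= N)%nat -> (j <= N)%nat ->
  Rabs (INR i - INR j) = psum (fun t => indicator (i <=? t)%nat * indicator (t <? j)%nat +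
                                        indicator (j <=? t)%nat * indicator (t <? i)%nat) N.
Proof.
  intros Hi Hj. rewrite psum_plus, !psum_count, (Nat.min_l j N Hj), (Nat.min_l i N Hi).
  destruct (le_lt_dec i j).
  - replace (i - j)%nat with 0%nat by lia. rewrite minus_INR by auto.
    assert (INR i <= INR j) by (apply le_INR; auto). rewrite Rabs_left1 by lra. simpl. ring.
  - replace (j - i)%nat with 0%nat by lia. rewrite minus_INR by lia.
    assert (INR j < INR i) by (apply lt_INR; auto). rewrite Rabs_right by lra. simpl. ring.
Qed.

Lemma quantile_coupling_cost (a b : nat -> R) N : (forall k, 0 <= a k) -> (forall k, 0 <= b k) ->
  psum (fun i => psum (fun j => quantile_coupling a b i j * Rabs (INR i - INR j)) (S N)) (S N)
  <= psum (fun t => Rabs (psum a (S t) - psum b (S t))) N.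
Proof.
  intros Ha Hb. set (c := quantile_coupling a b).
  set (cross := fun i j t => indicator (i <=? t)%nat * indicator (t <? j)%nat).
  rewrite (psum_ext _ (fun i => psum (fun t => psum (fun j =>
      c i j * cross i j t + c i j * cross j i t) (S N)) N)).
  2:{ intros i Hi. rewrite psum_exchange. apply psum_ext. intros j Hj.
      rewrite (abs_diff_count i j N) by lia. rewrite <- psum_scal. apply psum_ext.
      intros. unfold cross. ring. }
  rewrite psum_exchange. apply psum_le. intros t Ht.
  rewrite (psum_ext _ (fun i => psum (fun j => c i j * cross i j t) (S N) +
                                psum (fun j => c i j * cross j i t) (S N)))
    by (intros; apply psum_plus).
  rewrite psum_plus, (psum_exchange (fun i j => c i j * cross j i t)).
  rewrite (psum_ext (fun j => psum (fun i => c i j * cross j i t) (S N))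
    (fun j => psum (fun i => quantile_coupling b a j i * cross j i t) (S N)))
    by (intros; apply psum_ext; intros; unfold c, quantile_coupling; rewrite overlap_sym; reflexivity).
  pose proof (coupling_cross_mass a b t N Ha Hb Ht). pose proof (coupling_cross_mass b a t N Hb Ha Ht).
  unfold cross, c in *.
  unfold Rabs, Rmax in *. destruct (Rcase_abs (psum a (S t) - psum b (S t)));
    destruct (Rle_dec 0 (psum a (S t) - psum b (S t))); destruct (Rle_dec 0 (psum b (S t) - psum a (S t))); lra.
Qed.

(** * The absorption time of the leader election chain *)

Section LeaderElection.

Variable p : nat -> nat -> R.
Hypothesis Hnonneg : forall n k, (1 <= n)%nat -> 0 <= p n k.
Hypothesis Hsupp : forall n k, (1 <= n)%nat -> (k = 0%nat \/ (n < k)%nat) -> p n k = 0.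
Hypothesis Hmass : forall n, (1 <= n)%nat -> sum_f_R0 (p n) n = 1.

(* surv t i = Pr(X_i > t). *)
Definition surv (t i : nat) : R := 1 - reach p t i.

(* pmean T i = sum_(t<T) Pr(X_i > t), which increases to E X_i. *)
Definition pmean (T i : nat) : R := psum (fun t => surv t i) T.

Definition dmean (T n : nat) : R := pmean T (S n) - pmean T n.

Definition weight (n k : nat) : R := cdfY p n k - cdfY p (S n) k.

Lemma mass_psum n : (1 <= n)%nat -> psum (p n) (S n) = 1.
Proof. intros Hn. rewrite <- sum_f_R0_psum. auto. Qed.

Lemma p_at_0 n : (1 <= n)%nat -> p n 0%nat = 0.
Proof. intros Hn. apply Hsupp; auto. Qed.

Lemma cdfY_psum n k : cdfY p n k = psum (p n) (S k).
Proof. apply sum_f_R0_psum. Qed.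

Lemma surv_S t i : (1 <= i)%nat -> surv (S t) i = psum (fun k => p i k * surv t k) (S i).
Proof.
  intros Hi. unfold surv. simpl reach. rewrite sum_f_R0_psum.
  rewrite <- (mass_psum i Hi) at 1. rewrite <- psum_minus. apply psum_ext; intros; ring.
Qed.

Lemma surv_bounds t i : (1 <= i)%nat -> 0 <= surv t i <= 1.
Proof.
  revert i. induction t; intros i Hi.
  - unfold surv; simpl. destruct (Nat.eqb i 1); lra.
  - rewrite surv_S by auto. pose proof (mass_psum i Hi) as Hm. split.
    + apply psum_nonneg. intros [|k] Hk; [rewrite p_at_0; auto; lra |].
      apply Rmult_le_pos; auto. apply IHt; lia.
    + rewrite <- Hm. apply psum_le. intros [|k] Hk; [rewrite p_at_0; auto; lra |].
      specialize (IHt (S k) ltac:(lia)). specialize (Hnonneg i (S k) Hi). nra.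
Qed.

Lemma surv_1 t : surv t 1 = 0.
Proof.
  pose proof (mass_psum 1 (le_n 1)) as Hm. simpl in Hm. rewrite (p_at_0 1 (le_n 1)) in Hm.
  assert (Hr : reach p t 1 = 1).
  { induction t; [reflexivity |]. simpl reach. rewrite (p_at_0 1 (le_n 1)), IHt. simpl. lra. }
  unfold surv. rewrite Hr. ring.
Qed.

Lemma surv_S_le t i : (1 <= i)%nat -> surv (S t) i <= surv t i.
Proof.
  revert i. induction t; intros i Hi.
  - destruct (Nat.eq_dec i 1) as [-> | Hi1]; [rewrite !surv_1; lra |].
    unfold surv at 2. simpl. destruct (Nat.eqb_spec i 1); [lia |].
    pose proof (surv_bounds 1 i Hi). lra.
  - rewrite (surv_S (S t)), (surv_S t) by auto. apply psum_le. intros [|k] Hk.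
    + rewrite p_at_0; auto; lra.
    + apply Rmult_le_compat_l; auto. apply IHt; lia.
Qed.

Lemma pmf_nonneg n t : (1 <= n)%nat -> 0 <= pmfX p n t.
Proof.
  intros Hn. destruct t; simpl.
  - destruct (Nat.eqb n 1); lra.
  - pose proof (surv_S_le t n Hn). unfold surv in H. simpl in H. lra.
Qed.

Lemma pmf_partial_sum n N : sum_f_R0 (pmfX p n) N = 1 - surv N n.
Proof. unfold surv. induction N; simpl; [ring |]. rewrite IHN. simpl. ring. Qed.

Lemma mean_partial_sum n N :
  sum_f_R0 (fun t => INR t * pmfX p n t) N = pmean N n - INR N * surv N n.
Proof.
  induction N; [unfold pmean; simpl; ring |].
  change (sum_f_R0 (fun t => INR t * pmfX p n t) (S N)) with
    (sum_f_R0 (fun t => INR t * pmfX p n t) N + INR (S N) * (reach p (S N) n - reach p N n)).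
  rewrite IHN. unfold pmean, surv. simpl psum. rewrite S_INR. ring.
Qed.

Hypothesis Hnotn : forall n, (2 <= n)%nat -> p n n < 1.

Lemma stay_prob_bound N : exists rho, 0 <= rho < 1 /\ forall i, (2 <= i <= N)%nat -> p i i <= rho.
Proof.
  induction N as [| N [r [Hr H]]]; [exists 0; split; [lra | intros; lia] |].
  destruct (le_lt_dec 2 (S N)).
  - exists (Rmax r (p (S N) (S N))). split.
    + split; [apply Rle_trans with r; [lra | apply Rmax_l] |].
      apply Rmax_lub_lt; [lra | apply Hnotn; auto].
    + intros i Hi. destruct (Nat.eq_dec i (S N)) as [-> | ]; [apply Rmax_r |].
      apply Rle_trans with r; [apply H; lia | apply Rmax_l].
  - exists r. split; auto. intros; lia.
Qed.

Lemma surv_geom_rho N rho : 0 <= rho < 1 -> (forall i, (2 <= i <= N)%nat -> p i i <= rho) ->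
  forall t i, (1 <= i <= N)%nat -> surv t i <= 2 ^ i * ((1 + rho) / 2) ^ t.
Proof.
  intros Hr Hrho t. induction t; intros i Hi.
  - simpl. rewrite Rmult_1_r. pose proof (surv_bounds 0 i ltac:(lia)).
    assert (1 <= 2 ^ i) by (apply pow_R1_Rle; lra). lra.
  - destruct (Nat.eq_dec i 1) as [-> | ]; [rewrite surv_1; apply Rmult_le_pos; apply pow_le; lra |].
    destruct i as [|j]; [lia |]. rewrite surv_S, psum_S by lia.
    set (X := 2 ^ j * ((1 + rho) / 2) ^ t).
    assert (HX : 0 <= X) by (unfold X; apply Rmult_le_pos; apply pow_le; lra).
    assert (Hlow : psum (fun k => p (S j) k * surv t k) (S j) <= X * psum (p (S j)) (S j)).
    { rewrite <- psum_scal. apply psum_le. intros [|k] Hk; [rewrite p_at_0 by lia; lra |].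
      rewrite Rmult_comm. apply Rmult_le_compat_r; [apply Hnonneg; lia |].
      apply Rle_trans with (2 ^ (S k) * ((1 + rho) / 2) ^ t); [apply IHt; lia |].
      unfold X. apply Rmult_le_compat_r; [apply pow_le; lra | apply Rle_pow; [lra | lia]]. }
    pose proof (mass_psum (S j) ltac:(lia)) as Hm. rewrite psum_S in Hm.
    assert (Hq : p (S j) (S j) <= rho) by (apply Hrho; lia).
    assert (Hq0 : 0 <= p (S j) (S j)) by (apply Hnonneg; lia).
    assert (Htop : surv t (S j) <= 2 * X).
    { apply Rle_trans with (2 ^ (S j) * ((1 + rho) / 2) ^ t); [apply IHt; lia |].
      unfold X; simpl; lra. }
    replace (2 ^ S j * ((1 + rho) / 2) ^ S t) with (X * (1 + rho)) by (unfold X; simpl; field).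
    nra.
Qed.

Lemma surv_geometric n : exists lam, 0 <= lam < 1 /\
  forall t i, (1 <= i <= n)%nat -> surv t i <= 2 ^ n * lam ^ t.
Proof.
  destruct (stay_prob_bound n) as [r [Hr H]]. exists ((1 + r) / 2). split; [lra |].
  intros t i Hi. apply Rle_trans with (2 ^ i * ((1 + r) / 2) ^ t); [apply (surv_geom_rho n r); auto |].
  apply Rmult_le_compat_r; [apply pow_le; lra | apply Rle_pow; [lra | lia]].
Qed.

Lemma pmean_bounded n : exists B, 0 <= B /\ forall T i, (1 <= i <= n)%nat -> pmean T i <= B.
Proof.
  destruct (surv_geometric n) as [lam [Hl H]]. exists (2 ^ n / (1 - lam)). split.
  - apply Rmult_le_pos; [apply pow_le; lra | apply Rlt_le, Rinv_0_lt_compat; lra].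
  - intros T i Hi. unfold pmean. apply Rle_trans with (psum (fun t => 2 ^ n * lam ^ t) T).
    + apply psum_le. intros; auto.
    + rewrite psum_scal. unfold Rdiv. rewrite <- (Rmult_1_l (/ (1 - lam))).
      apply Rmult_le_compat_l; [apply pow_le; lra | apply (psum_geom lam T Hl)].
Qed.

Lemma pmean_cv n : (1 <= n)%nat -> exists l, Un_cv (fun T => pmean T n) l.
Proof.
  intros Hn. destruct (pmean_bounded n) as [B [_ HB]].
  destruct (growing_cv (fun T => pmean T n)) as [l Hl]; [| | exists l; auto].
  - intro T. unfold pmean. simpl. pose proof (surv_bounds T n Hn). lra.
  - exists B. intros x [T ->]. apply HB; lia.
Qed.

Lemma law_and_mean n l : (1 <= n)%nat -> Un_cv (fun T => pmean T n) l ->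
  infinite_sum (pmfX p n) 1 /\ infinite_sum (fun t => INR t * pmfX p n t) l.
Proof.
  intros Hn Hl. destruct (surv_geometric n) as [lam [Hlam H]].
  assert (Hb : forall N, 0 <= surv N n <= 2 ^ n * lam ^ N)
    by (intros N; split; [apply surv_bounds; auto | apply H; lia]).
  split.
  - assert (HG : Un_cv (fun N => surv N n) 0)
      by (apply squeeze_0 with (fun t => lam ^ t) (2 ^ n); auto; apply pow_cv_0; auto).
    intros e He. destruct (HG e He) as [N HN]. exists N. intros m Hm.
    specialize (HN m Hm). unfold R_dist in *. rewrite pmf_partial_sum.
    replace (1 - surv m n - 1) with (- (surv m n - 0)) by ring. rewrite Rabs_Ropp. auto.
  - assert (HNG : Un_cv (fun N => INR N * surv N n) 0).
    { apply squeeze_0 with (b := fun t => INR t * lam ^ t) (c := 2 ^ n);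
        [| apply INR_mul_pow_cv_0; auto].
      intro N. pose proof (pos_INR N). specialize (Hb N). split; nra. }
    intros e He. destruct (CV_minus _ _ _ _ Hl HNG e He) as [N HN]. exists N. intros m Hm.
    specialize (HN m Hm). unfold R_dist in *. rewrite mean_partial_sum. rewrite Rminus_0_r in HN. exact HN.
Qed.

Lemma expect_diff_by_parts g n : (1 <= n)%nat ->
  psum (fun k => p (S n) k * g k) (S (S n)) - psum (fun k => p n k * g k) (S n) =
  psum (fun k => weight n k * (g (S k) - g k)) (S n).
Proof.
  intros Hn. rewrite (psum_by_parts (p (S n)) g (S n)), (psum_by_parts (p n) g n).
  rewrite (mass_psum (S n)), (mass_psum n) by lia.
  rewrite (psum_ext (fun k => weight n k * (g (S k) - g k))
    (fun k => psum (p n) (S k) * (g (S k) - g k) - psum (p (S n)) (S k) * (g (S k) - g k)))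
    by (intros; unfold weight; rewrite !cdfY_psum; ring).
  rewrite psum_minus, (psum_S (fun k => psum (p n) (S k) * (g (S k) - g k)) n).
  rewrite (mass_psum n) by lia. ring.
Qed.

Lemma EY_diff n : (1 <= n)%nat -> EY p (S n) - EY p n = psum (weight n) (S n).
Proof.
  intros Hn. unfold EY. rewrite !sum_f_R0_psum.
  rewrite (psum_ext (fun k => INR k * p (S n) k) (fun k => p (S n) k * INR k)) by (intros; ring).
  rewrite (psum_ext (fun k => INR k * p n k) (fun k => p n k * INR k)) by (intros; ring).
  rewrite expect_diff_by_parts by auto. apply psum_ext. intros. rewrite S_INR. ring.
Qed.

Lemma weight_at_0 n : (1 <= n)%nat -> weight n 0 = 0.
Proof. intros Hn. unfold weight, cdfY. simpl. rewrite !p_at_0 by lia. ring. Qed.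

Lemma cdfY_nonneg n k : (1 <= n)%nat -> 0 <= cdfY p n k.
Proof. intros Hn. rewrite cdfY_psum. apply psum_nonneg. auto. Qed.

Lemma cdfY_le_1 n k : (1 <= n)%nat -> (k <= n)%nat -> cdfY p n k <= 1.
Proof.
  intros Hn Hk. rewrite cdfY_psum, <- (mass_psum n Hn). apply psum_mono; [auto | lia].
Qed.

Lemma weight_le_cdfY n k : (1 <= n)%nat -> weight n k <= cdfY p n k.
Proof. intros. unfold weight. pose proof (cdfY_nonneg (S n) k ltac:(lia)). lra. Qed.

Lemma weight_le_tail n k : (1 <= n)%nat -> (k <= n)%nat -> weight n k <= 1 - cdfY p (S n) k.
Proof. intros Hn Hk. unfold weight. pose proof (cdfY_le_1 n k Hn Hk). lra. Qed.

Lemma pmean_S T i : (1 <= i)%nat ->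
  pmean (S T) i = surv 0 i + psum (fun k => p i k * pmean T k) (S i).
Proof.
  intros Hi. induction T.
  - unfold pmean. simpl psum at 1. rewrite (psum_ext _ (fun _ => 0)) by (intros; simpl; ring).
    rewrite psum_const. ring.
  - unfold pmean at 1. rewrite psum_S. fold (pmean (S T) i). rewrite IHT, surv_S by auto.
    rewrite Rplus_assoc, <- psum_plus. f_equal. apply psum_ext. intros. unfold pmean. rewrite psum_S. ring.
Qed.

Lemma dmean_0 n : dmean 0 n = 0.
Proof. unfold dmean, pmean. simpl. ring. Qed.

Lemma dmean_S T n : (2 <= n)%nat ->
  dmean (S T) n = psum (fun k => weight n k * dmean T k) (S n).
Proof.
  intros Hn. unfold dmean. rewrite (pmean_S T (S n)), (pmean_S T n) by lia.
  rewrite <- (expect_diff_by_parts (pmean T) n) by lia.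
  unfold surv. destruct n as [|[|n]]; [lia | lia |]. simpl. ring.
Qed.

Hypothesis Hmono : forall n k, (1 <= n)%nat -> (1 <= k)%nat -> cdfY p (S n) k <= cdfY p n k.

Lemma weight_nonneg n k : (1 <= n)%nat -> 0 <= weight n k.
Proof.
  intros Hn. destruct k; [rewrite weight_at_0; auto; lra |].
  unfold weight. specialize (Hmono n (S k) Hn ltac:(lia)). lra.
Qed.

Lemma surv_mono_S t n : (1 <= n)%nat -> surv t n <= surv t (S n).
Proof.
  revert n. induction t; intros n Hn.
  - unfold surv. simpl. destruct n as [|[|n]]; [lia | simpl; lra | simpl; lra].
  - enough (0 <= surv (S t) (S n) - surv (S t) n) by lra.
    rewrite !surv_S by lia. rewrite expect_diff_by_parts by auto.
    apply psum_nonneg. intros [|k] Hk; [rewrite weight_at_0; auto; lra |].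
    apply Rmult_le_pos; [apply weight_nonneg; auto |].
    assert (surv t (S k) <= surv t (S (S k))) by (apply IHt; lia). lra.
Qed.

Lemma surv_mono t n m : (1 <= n <= m)%nat -> surv t n <= surv t m.
Proof.
  intros [H1 H2]. induction H2; [lra |].
  apply Rle_trans with (surv t m); auto. apply surv_mono_S; lia.
Qed.

Lemma dmean_nonneg T n : (1 <= n)%nat -> 0 <= dmean T n.
Proof.
  intros Hn. unfold dmean, pmean. rewrite <- psum_minus. apply psum_nonneg. intros.
  pose proof (surv_mono_S k n Hn). lra.
Qed.

Lemma pmean_gap T n m : (1 <= n <= m)%nat ->
  psum (fun t => Rabs (surv t m - surv t n)) T = pmean T m - pmean T n.
Proof.
  intros Hnm. unfold pmean. rewrite <- psum_minus. apply psum_ext. intros.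
  pose proof (surv_mono k n m Hnm). rewrite Rabs_right; lra.
Qed.

Lemma pmean_gap_le T n m K : (1 <= n <= m)%nat -> 0 <= K ->
  (forall k, (1 <= k)%nat -> INR k * dmean T k <= K) ->
  pmean T m - pmean T n <= INR (m - n) * (K / INR n).
Proof.
  intros [Hn Hnm] HK HD. induction Hnm; [rewrite Nat.sub_diag; simpl; lra |].
  replace (S m - n)%nat with (S (m - n)) by lia. rewrite S_INR.
  assert (dmean T m <= K / INR n).
  { specialize (HD m ltac:(lia)).
    assert (1 <= INR n) by (apply (le_INR 1); auto). assert (INR n <= INR m) by (apply le_INR; auto).
    pose proof (dmean_nonneg T m ltac:(lia)).
    apply (Rmult_le_reg_l (INR n)); [lra |]. unfold Rdiv.
    rewrite <- Rmult_assoc, (Rmult_comm (INR n) K), Rmult_assoc, Rinv_r by lra. nra. }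
  unfold dmean in *. lra.
Qed.

Lemma cdfY_le_devY alpha dn n k : (1 <= n)%nat -> (k <= n)%nat ->
  INR k < (alpha - Rabs dn) * INR n -> cdfY p n k <= devY p alpha dn n.
Proof.
  intros Hn Hk Hlt. unfold devY. rewrite cdfY_psum, sum_f_R0_psum.
  set (g := fun j => if Rlt_dec (dn * INR n) (Rabs (INR j - alpha * INR n)) then p n j else 0).
  assert (Hg : forall j, 0 <= g j) by (intros j; unfold g; destruct Rlt_dec; [auto | lra]).
  apply Rle_trans with (psum g (S k)); [| apply psum_mono; [auto | lia]].
  apply psum_le. intros j Hj. unfold g. destruct Rlt_dec as [_ | Hc]; [lra | exfalso; apply Hc].
  assert (INR j <= INR k) by (apply le_INR; lia).
  pose proof (Ropp_le_abs (INR j - alpha * INR n)). pose proof (Rle_abs dn). pose proof (pos_INR n).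
  nra.
Qed.

Lemma tail_le_devY alpha dn m k : (1 <= m)%nat -> (k < m)%nat ->
  (alpha + Rabs dn) * INR m <= INR k -> 1 - cdfY p m k <= devY p alpha dn m.
Proof.
  intros Hm Hk Hle. unfold devY. rewrite cdfY_psum, sum_f_R0_psum, <- (mass_psum m Hm).
  apply psum_tail_le; [lia | intros j; destruct Rlt_dec; [auto | lra] |].
  intros j Hj. destruct Rlt_dec as [_ | Hc]; [lra | exfalso; apply Hc].
  assert (INR k + 1 <= INR j) by (rewrite <- S_INR; apply le_INR; lia).
  pose proof (Rle_abs (INR j - alpha * INR m)). pose proof (Rle_abs dn). pose proof (pos_INR m).
  nra.
Qed.

(** ** The key estimate: n * dmean T n = O(1) *)

Section KeyBound.

Variables alpha eps Cm Cc Cd : R.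
Variable delta : nat -> R.
Variables Nm Nc Nd : nat.
Hypotheses (Halpha : 0 < alpha < 1) (Heps : 0 < eps).
Hypotheses (HCm : 0 <= Cm) (HCc : 0 <= Cc) (HCd : 0 <= Cd).
Hypothesis Hdelta : forall n, (Nd <= n)%nat -> Rabs (delta n) <= Cd * Rpower (ln (INR n)) (-1 - eps).
Hypothesis Hmean : forall n, (Nm <= n)%nat -> EY p (S n) - EY p n <= alpha + Cm * Rabs (delta n).
Hypothesis Hconc : forall n, (Nc <= n)%nat -> devY p alpha (delta n) n <= Cc * Rpower (INR n) (-2 - eps).

(* Y_(n+1) rarely exceeds beta n, a cut-off strictly between alpha n and n. *)
Definition beta : R := (1 + alpha) / 2.

(* The constants of the comparison function, chosen so that phi_gap pays for
   the mean error (ii) and for the deviation probabilities (iii). *)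
Definition ratio_const : R := 2 * (Cm + 1) / alpha.
Definition K1 : R := ratio_const * Cd / (eps * - ln beta).
Definition a_const : R := 2 * Cc / (Rpower beta (- eps) - 1).
Definition phi_key (x : R) : R := phi K1 a_const eps x.

Lemma beta_bounds : 0 < beta < 1.
Proof. unfold beta. lra. Qed.

Lemma K1_nonneg : 0 <= K1.
Proof.
  pose proof (ln_neg beta beta_bounds). unfold K1, ratio_const.
  apply Rmult_le_pos; [| apply Rlt_le, Rinv_0_lt_compat; nra].
  apply Rmult_le_pos; [| lra]. apply Rmult_le_pos; [lra | apply Rlt_le, Rinv_0_lt_compat; lra].
Qed.

Lemma a_const_nonneg : 0 <= a_const.
Proof.
  pose proof (Rpower_opp_gt_1 beta eps beta_bounds Heps). unfold a_const.
  apply Rmult_le_pos; [lra | apply Rlt_le, Rinv_0_lt_compat; lra].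
Qed.

Lemma phi_key_mono x y : 1 < x -> x <= y -> phi_key x <= phi_key y.
Proof. apply phi_mono; [apply K1_nonneg | apply a_const_nonneg | auto]. Qed.

Lemma phi_key_le_1 x : phi_key x <= 1.
Proof. apply phi_le_1; [apply K1_nonneg | apply a_const_nonneg]. Qed.

Lemma ratio_bound d : 0 <= d <= alpha / 2 -> (alpha + Cm * d) / (alpha - d) <= 1 + ratio_const * d.
Proof.
  intros Hd. apply (Rmult_le_reg_r (alpha - d)); [lra |].
  unfold Rdiv. rewrite Rmult_assoc, Rinv_l, Rmult_1_r by lra. unfold ratio_const.
  assert (E : 2 * (Cm + 1) / alpha * alpha = 2 * (Cm + 1)) by (field; lra).
  assert (2 * (Cm + 1) / alpha * d <= Cm + 1).
  { apply (Rmult_le_reg_r alpha); [lra |].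
    replace (2 * (Cm + 1) / alpha * d * alpha) with (2 * (Cm + 1) * d) by (field; lra). nra. }
  unfold Rdiv in *. nra.
Qed.

Lemma phi_key_recursion x d : 1 < beta * x -> 0 <= d <= alpha / 2 ->
  d <= Cd * Rpower (ln x) (-1 - eps) -> 0 <= phi_key (beta * x) ->
  phi_key (beta * x) * ((alpha + Cm * d) / (alpha - d)) + 2 * Cc * Rpower x (- eps) <= phi_key x.
Proof.
  intros Hbx Hd Hdl Htau. set (tau := phi_key (beta * x)) in *.
  pose proof (phi_gap K1 a_const eps K1_nonneg Heps beta x beta_bounds Hbx) as Hgap.
  pose proof (ln_neg beta beta_bounds).
  pose proof (Rpower_opp_gt_1 beta eps beta_bounds Heps).
  assert (HK : K1 * (eps * - ln beta * Rpower (ln x) (-1 - eps)) =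
               ratio_const * Cd * Rpower (ln x) (-1 - eps)) by (unfold K1; field; nra).
  assert (Ha : a_const * (Rpower beta (- eps) - 1) * Rpower x (- eps) = 2 * Cc * Rpower x (- eps))
    by (unfold a_const; field; lra).
  fold (phi_key x) (phi_key (beta * x)) tau in Hgap. rewrite HK, Ha in Hgap.
  assert (tau <= 1) by apply phi_key_le_1.
  assert (0 <= ratio_const) by (pose proof K1_nonneg; unfold ratio_const;
    apply Rmult_le_pos; [lra | apply Rlt_le, Rinv_0_lt_compat; lra]).
  assert (tau * ((alpha + Cm * d) / (alpha - d)) <= tau * (1 + ratio_const * d))
    by (apply Rmult_le_compat_l; [auto | apply ratio_bound; auto]).
  assert (ratio_const * d <= ratio_const * (Cd * Rpower (ln x) (-1 - eps)))
    by (apply Rmult_le_compat_l; auto).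
  assert (0 <= ratio_const * d) by nra.
  nra.
Qed.

Definition large (n0 n : nat) : Prop :=
  (Nm <= n)%nat /\ (Nc <= n)%nat /\ (Nd <= n)%nat /\
  Rabs (delta n) <= alpha / 2 /\ Rabs (delta n) <= (1 - alpha) / 8 /\
  Rabs (delta (S n)) <= (1 - alpha) / 8 /\
  16 <= (1 - alpha) * INR n /\ 2 * INR n0 <= alpha * INR n.

Lemma eventually_large n0 : eventually (large n0).
Proof.
  assert (Hs : forall dd, 0 < dd -> eventually (fun n => Rabs (delta n) <= dd))
    by (intros; apply (eventually_small delta eps dd Cd Nd); auto; lra).
  destruct (eventually_and _ _ (eventually_ge (Nm + Nc + Nd))
    (eventually_and _ _ (eventually_and _ _ (Hs (alpha / 2) ltac:(lra)) (Hs ((1 - alpha) / 8) ltac:(lra)))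
      (eventually_and _ _ (eventually_S _ (Hs ((1 - alpha) / 8) ltac:(lra)))
        (eventually_INR_ge (16 / (1 - alpha) + 2 * INR n0 / alpha))))) as [N HN].
  exists N. intros n Hn. destruct (HN n Hn) as [Hge [[H1 H2] [H3 H4]]].
  pose proof (pos_INR n0).
  assert (0 <= 16 / (1 - alpha)) by (apply Rmult_le_pos; [lra | apply Rlt_le, Rinv_0_lt_compat; lra]).
  assert (0 <= 2 * INR n0 / alpha) by (apply Rmult_le_pos; [lra | apply Rlt_le, Rinv_0_lt_compat; lra]).
  assert (16 / (1 - alpha) * (1 - alpha) = 16) by (field; lra).
  assert (2 * INR n0 / alpha * alpha = 2 * INR n0) by (field; lra).
  repeat split; try lia; auto; nra.
Qed.

Lemma large_INR n0 n : large n0 n -> 16 <= INR n /\ (2 <= n)%nat.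
Proof.
  intros (_ & _ & _ & _ & _ & _ & Hx16 & _). pose proof (pos_INR n).
  assert (16 <= INR n) by nra. split; auto.
  destruct (le_lt_dec 2 n); auto. assert (INR n <= INR 1) by (apply le_INR; lia). simpl in *. lra.
Qed.

Lemma weight_outside_window n0 n k : large n0 n -> (k <= n)%nat ->
  INR k < (alpha - Rabs (delta n)) * INR n \/ beta * INR n < INR k ->
  weight n k <= Cc * Rpower (INR n) (-2 - eps).
Proof.
  intros Hl Hk Hout. destruct (large_INR n0 n Hl) as [Hx16 Hn2].
  destruct Hl as (Hm & Hc & Hd & Hd1 & Hd2 & Hd3 & Hx & Hxn0). destruct Hout as [Hlow | Hhigh].
  - apply Rle_trans with (cdfY p n k); [apply weight_le_cdfY; lia |].
    apply Rle_trans with (devY p alpha (delta n) n); [apply cdfY_le_devY; auto; lia | auto].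
  - apply Rle_trans with (1 - cdfY p (S n) k); [apply weight_le_tail; lia |].
    apply Rle_trans with (devY p alpha (delta (S n)) (S n)).
    + apply tail_le_devY; [lia | lia |]. rewrite S_INR. unfold beta in Hhigh.
      assert (Rabs (delta (S n)) * (INR n + 1) <= (1 - alpha) / 8 * (INR n + 1))
        by (apply Rmult_le_compat_r; lra).
      nra.
    + apply Rle_trans with (Cc * Rpower (INR (S n)) (-2 - eps)); [apply Hconc; lia |].
      apply Rmult_le_compat_l; auto. replace (-2 - eps) with (- (2 + eps)) by ring.
      apply Rpower_opp_anti; [lra | rewrite S_INR; lra | lra].
Qed.

Section Induction.

Variables (n0 : nat) (K : R).
Hypotheses (Hn0 : 2 <= INR n0) (Hphi0 : 1 / 2 <= phi_key (INR n0)) (HK : 0 <= K).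

(* The induction hypothesis, with the slack 1 - phi_key absorbing the errors. *)
Definition good (n T : nat) : Prop :=
  INR n * dmean T n <= K * phi_key (Rmax (INR n) (INR n0)).

Lemma phi_key_ge_half x : INR n0 <= x -> 1 / 2 <= phi_key x.
Proof. intros. apply Rle_trans with (phi_key (INR n0)); [auto | apply phi_key_mono; lra]. Qed.

Lemma good_le_K n T : (1 <= n)%nat -> good n T -> dmean T n <= K.
Proof.
  unfold good. intros Hn H. pose proof (phi_key_le_1 (Rmax (INR n) (INR n0))).
  assert (1 <= INR n) by (apply (le_INR 1); auto). pose proof (dmean_nonneg T n Hn). nra.
Qed.

Lemma good_small n1 n T : (1 <= n <= n1)%nat ->
  (forall i, (1 <= i <= S n1)%nat -> 2 * INR n1 * pmean T i <= K) -> good n T.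
Proof.
  intros Hn HB. unfold good. specialize (HB (S n) ltac:(lia)).
  assert (0 <= pmean T n)
    by (apply psum_nonneg; intros; apply surv_bounds; lia).
  assert (0 <= dmean T n) by (apply dmean_nonneg; lia).
  assert (INR n <= INR n1) by (apply le_INR; lia). pose proof (pos_INR n).
  pose proof (phi_key_ge_half (Rmax (INR n) (INR n0)) (Rmax_r _ _)).
  unfold dmean in *. nra.
Qed.

Lemma dmean_window n k T : large n0 n -> (1 <= k)%nat ->
  (alpha - Rabs (delta n)) * INR n <= INR k <= beta * INR n -> good k T ->
  dmean T k <= K * phi_key (beta * INR n) / ((alpha - Rabs (delta n)) * INR n).
Proof.
  intros (_ & _ & _ & Hd1 & _ & _ & Hx16 & Hxn0) Hk1 [Hlo Hhi] Hgood. unfold good in Hgood.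
  pose proof (Rabs_pos (delta n)). pose proof (pos_INR n).
  assert (Hk0 : INR n0 <= INR k) by nra.
  rewrite Rmax_left in Hgood by lra.
  assert (phi_key (INR k) <= phi_key (beta * INR n)) by (apply phi_key_mono; lra).
  assert (0 < (alpha - Rabs (delta n)) * INR n) by nra.
  assert (K * phi_key (INR k) <= K * phi_key (beta * INR n)) by (apply Rmult_le_compat_l; auto).
  pose proof (dmean_nonneg T k Hk1).
  assert (dmean T k * ((alpha - Rabs (delta n)) * INR n) <= dmean T k * INR k)
    by (apply Rmult_le_compat_l; auto).
  apply (Rmult_le_reg_r ((alpha - Rabs (delta n)) * INR n)); [lra |].
  unfold Rdiv. rewrite Rmult_assoc, Rinv_l by lra. nra.
Qed.

Lemma step_arith n X : large n0 n ->
  X = K * phi_key (beta * INR n) / ((alpha - Rabs (delta n)) * INR n) ->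
  INR n * (X * (alpha + Cm * Rabs (delta n)) +
           INR (S n) * (Cc * Rpower (INR n) (-2 - eps) * K)) <= K * phi_key (INR n).
Proof.
  intros Hl ->. destruct (large_INR n0 n Hl) as [Hx _].
  destruct Hl as (_ & _ & Hd & Hd1 & _ & _ & _ & Hxn0). pose proof (Rabs_pos (delta n)) as Hd0.
  set (x := INR n) in *. set (d := Rabs (delta n)) in *. set (tau := phi_key (beta * x)).
  assert (0 <= alpha * x) by (apply Rmult_le_pos; lra).
  assert (Htau : 1 / 2 <= tau) by (apply phi_key_ge_half; unfold beta; lra).
  assert (Hrec : tau * ((alpha + Cm * d) / (alpha - d)) + 2 * Cc * Rpower x (- eps) <= phi_key x).
  { apply phi_key_recursion; [unfold beta; lra | lra | apply Hdelta; auto | fold tau; lra]. }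
  assert (HE : x * (INR (S n) * (Cc * Rpower x (-2 - eps))) <= 2 * Cc * Rpower x (- eps)).
  { rewrite Rpower_minus_2, S_INR by lra. fold x. pose proof (Rpower_pos x (- eps)).
    replace (x * ((x + 1) * (Cc * (Rpower x (- eps) / (x * x)))))
      with (Cc * Rpower x (- eps) * ((x + 1) / x)) by (field; lra).
    assert ((x + 1) / x <= 2).
    { apply (Rmult_le_reg_r x); [lra |]. unfold Rdiv. rewrite Rmult_assoc, Rinv_l by lra. lra. }
    assert (0 <= Cc * Rpower x (- eps)) by nra. nra. }
  replace (x * (K * tau / ((alpha - d) * x) * (alpha + Cm * d) +
     INR (S n) * (Cc * Rpower x (-2 - eps) * K)))
    with (K * (tau * ((alpha + Cm * d) / (alpha - d))) + x * (INR (S n) * (Cc * Rpower x (-2 - eps))) * K)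
    by (field; split; lra).
  assert (K * (tau * ((alpha + Cm * d) / (alpha - d)) + 2 * Cc * Rpower x (- eps)) <= K * phi_key x)
    by (apply Rmult_le_compat_l; auto).
  assert (x * (INR (S n) * (Cc * Rpower x (-2 - eps))) * K <= 2 * Cc * Rpower x (- eps) * K)
    by (apply Rmult_le_compat_r; auto).
  nra.
Qed.

Lemma good_large n : large n0 n -> (forall k T, (1 <= k < n)%nat -> good k T) -> forall T, good n T.
Proof.
  intros Hl IH. destruct (large_INR n0 n Hl) as [Hx16 Hn2].
  pose proof Hl as (Hm & _ & _ & Hd1 & Hd2 & Hd3 & Hx & Hxn0).
  pose proof (pos_INR n0). pose proof (Rabs_pos (delta n)).
  unfold good at 1. rewrite Rmax_left by nra.
  set (X := K * phi_key (beta * INR n) / ((alpha - Rabs (delta n)) * INR n)).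
  set (E := Cc * Rpower (INR n) (-2 - eps)).
  assert (HX : 0 <= X).
  { unfold X. pose proof (phi_key_ge_half (beta * INR n) ltac:(unfold beta; nra)).
    apply Rmult_le_pos; [nra | apply Rlt_le, Rinv_0_lt_compat; nra]. }
  assert (HE : 0 <= E) by (unfold E; pose proof (Rpower_pos (INR n) (-2 - eps)); nra).
  induction T as [|T IHT].
  { rewrite dmean_0, Rmult_0_r. pose proof (phi_key_ge_half (INR n) ltac:(nra)). nra. }
  assert (HD : forall k, (1 <= k <= n)%nat -> 0 <= dmean T k <= K).
  { intros k Hk. split; [apply dmean_nonneg; lia |]. apply good_le_K; [lia |].
    destruct (Nat.eq_dec k n) as [-> | ]; [| apply IH; lia].
    unfold good. rewrite Rmax_left by nra. auto. }
  apply Rle_trans with (INR n * (X * (alpha + Cm * Rabs (delta n)) + INR (S n) * (E * K)));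
    [| apply step_arith; auto].
  apply Rmult_le_compat_l; [apply pos_INR |]. rewrite dmean_S by auto.
  eapply Rle_trans; [apply (psum_weighted_le _ _ X E K); auto |].
  - intros [|k] Hk; [left; apply weight_at_0; lia | right].
    split; [apply weight_nonneg; lia | split; [apply HD; lia |]].
    destruct (Rlt_dec (INR (S k)) ((alpha - Rabs (delta n)) * INR n)) as [Hlow |];
      [left; apply (weight_outside_window n0); auto; lia |].
    destruct (Rlt_dec (beta * INR n) (INR (S k))) as [Hhigh |];
      [left; apply (weight_outside_window n0); auto; lia |].
    right. apply dmean_window; [auto | lia | lra |]. apply IH. split; [lia |].
    apply INR_lt. unfold beta in *. nra.
  - rewrite <- EY_diff by lia. apply Rplus_le_compat_r, Rmult_le_compat_l; auto.
Qed.

Lemma good_all n1 : (forall n, (n1 < n)%nat -> large n0 n) ->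
  (forall T i, (1 <= i <= S n1)%nat -> 2 * INR n1 * pmean T i <= K) ->
  forall n T, (1 <= n)%nat -> good n T.
Proof.
  intros Hl HB n. induction n as [n IH] using lt_wf_ind. intros T Hn.
  destruct (le_lt_dec n n1).
  - apply (good_small n1); auto.
  - apply good_large; auto. intros k T' Hk. apply IH; lia.
Qed.

End Induction.

(* Strong induction on n, with n1 the threshold beyond which n is large and
   K = 2 n1 B for a bound B on the partial means up to n1 + 1. *)
Lemma dmean_scaled_bound_key : exists K, 0 <= K /\ forall n T, (1 <= n)%nat -> INR n * dmean T n <= K.
Proof.
  destruct (phi_ge_half K1 a_const eps K1_nonneg a_const_nonneg Heps) as [n0 [Hn0 Hphi0]].
  destruct (eventually_large n0) as [n1 Hn1].
  destruct (pmean_bounded (S n1)) as [B [HB0 HB]].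
  pose proof (pos_INR n1).
  exists (2 * INR n1 * B). split; [nra |]. intros n T Hn.
  apply Rle_trans with (2 * INR n1 * B * phi_key (Rmax (INR n) (INR n0))).
  - apply (good_all n0 (2 * INR n1 * B) Hn0 Hphi0 ltac:(nra) n1); auto.
    + intros; apply Hn1; lia.
    + intros T' i Hi. specialize (HB T' i Hi). nra.
  - pose proof (phi_key_le_1 (Rmax (INR n) (INR n0))). assert (0 <= 2 * INR n1 * B) by nra. nra.
Qed.

End KeyBound.

Lemma dmean_scaled_bound alpha eps (delta : nat -> R) :
  0 < alpha < 1 -> 0 < eps ->
  (exists C N, forall n, (N <= n)%nat -> Rabs (delta n) <= C * Rpower (ln (INR n)) (-1 - eps)) ->
  (exists C N, forall n, (N <= n)%nat -> Rabs (EY p (S n) - EY p n - alpha) <= C * Rabs (delta n)) ->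
  (exists C N, forall n, (N <= n)%nat -> devY p alpha (delta n) n <= C * Rpower (INR n) (-2 - eps)) ->
  exists K, 0 <= K /\ forall n T, (1 <= n)%nat -> INR n * dmean T n <= K.
Proof.
  intros Halpha Heps Hdelta Hmean Hconc.
  destruct (bigO_nonneg_const _ _ (fun n => Rlt_le _ _ (Rpower_pos (ln (INR n)) (-1 - eps))) Hdelta)
    as [Cd [Nd [HCd Hd]]].
  destruct (bigO_nonneg_const _ _ (fun n => Rlt_le _ _ (Rpower_pos (INR n) (-2 - eps))) Hconc)
    as [Cc [Nc [HCc Hc]]].
  destruct (bigO_nonneg_const (fun n => EY p (S n) - EY p n - alpha) _ (fun n => Rabs_pos (delta n)))
    as [Cm [Nm [HCm Hm]]].
  { destruct Hmean as [C [N H]]. exists C, N. intros n Hn.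
    eapply Rle_trans; [apply Rle_abs | auto]. }
  apply (dmean_scaled_bound_key alpha eps Cm Cc Cd delta Nm Nc Nd); auto.
  intros n Hn. specialize (Hm n Hn). lra.
Qed.

Lemma mean_sequence : exists EX : nat -> R, forall n, (1 <= n)%nat -> Un_cv (fun T => pmean T n) (EX n).
Proof.
  assert (Hex : forall n, exists l, (1 <= n)%nat -> Un_cv (fun T => pmean T n) l).
  { intros n. destruct (le_lt_dec 1 n) as [Hn | Hn].
    - destruct (pmean_cv n Hn) as [l Hl]. exists l; auto.
    - exists 0. intros; lia. }
  exists (fun n => proj1_sig (constructive_indefinite_description _ (Hex n))).
  intros n Hn. destruct (constructive_indefinite_description _ (Hex n)) as [l Hl]. simpl. auto.
Qed.

Lemma mean_increment_bound EX K : (forall n, (1 <= n)%nat -> Un_cv (fun T => pmean T n) (EX n)) ->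
  (forall n T, (1 <= n)%nat -> INR n * dmean T n <= K) ->
  forall n, (1 <= n)%nat -> Rabs (EX (S n) - EX n) <= K / INR n.
Proof.
  intros HEX HD n Hn. pose proof (CV_minus _ _ _ _ (HEX (S n) ltac:(lia)) (HEX n Hn)) as Hc.
  assert (1 <= INR n) by (apply (le_INR 1); auto).
  assert (Hup : EX (S n) - EX n <= K / INR n).
  { eapply Rle_cv_lim; [| exact Hc | apply (Un_cv_const (K / INR n))].
    intros T. cbv beta. fold (dmean T n). specialize (HD n T Hn).
    apply (Rmult_le_reg_l (INR n)); [lra |]. unfold Rdiv.
    rewrite <- Rmult_assoc, (Rmult_comm (INR n) K), Rmult_assoc, Rinv_r by lra. lra. }
  assert (Hlow : 0 <= EX (S n) - EX n).
  { eapply Rle_cv_lim; [| apply (Un_cv_const 0) | exact Hc].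
    intros T. cbv beta. fold (dmean T n). apply dmean_nonneg; auto. }
  rewrite Rabs_right; lra.
Qed.

Lemma surv_L1_gap K N n m : 0 <= K -> (forall k T, (1 <= k)%nat -> INR k * dmean T k <= K) ->
  (1 <= n <= m)%nat -> psum (fun t => Rabs (surv t m - surv t n)) N <= K * (INR m - INR n) / INR n.
Proof.
  intros HK HD Hnm. rewrite pmean_gap by auto.
  eapply Rle_trans; [apply (pmean_gap_le N n m K); auto |].
  rewrite minus_INR by lia. unfold Rdiv. lra.
Qed.

(* Wasserstein bound, realised by the quantile coupling. *)
Lemma wasserstein_bound K : 0 <= K -> (forall k T, (1 <= k)%nat -> INR k * dmean T k <= K) ->
  forall n m, (1 <= n)%nat -> (1 <= m)%nat ->
  wass_le (pmfX p n) (pmfX p m) (K * Rabs (INR n - INR m) / INR (Nat.min n m)).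
Proof.
  intros HK HD n m Hn Hm eta Heta. exists (quantile_coupling (pmfX p n) (pmfX p m)).
  assert (Hlaw : forall k, (1 <= k)%nat -> infinite_sum (pmfX p k) 1).
  { intros k Hk. destruct (pmean_cv k Hk) as [l Hl]. apply (law_and_mean k l Hk Hl). }
  split; [apply quantile_coupling_is_coupling; auto; intros; apply pmf_nonneg; auto |].
  intros N. rewrite sum_f_R0_psum, (psum_ext _ (fun i => psum (fun j =>
    quantile_coupling (pmfX p n) (pmfX p m) i j * Rabs (INR i - INR j)) (S N))) by (intros; apply sum_f_R0_psum).
  eapply Rle_trans; [apply quantile_coupling_cost; intros; apply pmf_nonneg; auto |].
  rewrite (psum_ext _ (fun t => Rabs (surv t m - surv t n)))
    by (intros t _; rewrite <- !sum_f_R0_psum, !pmf_partial_sum; f_equal; ring).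
  destruct (le_lt_dec n m) as [Hnm | Hnm].
  - rewrite Nat.min_l, Rabs_left1 by (auto; assert (INR n <= INR m) by (apply le_INR; auto); lra).
    replace (K * - (INR n - INR m)) with (K * (INR m - INR n)) by ring.
    pose proof (surv_L1_gap K N n m HK HD ltac:(lia)). lra.
  - rewrite (psum_ext _ (fun t => Rabs (surv t n - surv t m))) by (intros; apply Rabs_minus_sym).
    rewrite Nat.min_r, Rabs_right by (try lia; assert (INR m < INR n) by (apply lt_INR; auto); lra).
    pose proof (surv_L1_gap K N m n HK HD ltac:(lia)). lra.
Qed.

End LeaderElection.

Theorem mainTheorem2
  (p : nat -> nat -> R) (alpha eps : R) (delta : nat -> R)
  (* Y_n is a random variable with values in {1,...,n}: p n k = Pr(Y_n = k) *)
  (Hnonneg : forall n k, (1 <= n)%nat -> 0 <= p n k)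
  (Hsupp : forall n k, (1 <= n)%nat -> (k = 0%nat \/ (n < k)%nat) -> p n k = 0)
  (Hmass : forall n, (1 <= n)%nat -> sum_f_R0 (p n) n = 1)
  (Hnotn : forall n, (2 <= n)%nat -> p n n < 1)
  (* (i) stochastic monotonicity *)
  (Hmono : forall n k, (1 <= n)%nat -> (1 <= k)%nat -> cdfY p (S n) k <= cdfY p n k)
  (* parameters *)
  (Halpha : 0 < alpha < 1) (Heps : 0 < eps)
  (Hdelta : exists C N, forall n, (N <= n)%nat ->
              Rabs (delta n) <= C * Rpower (ln (INR n)) (-1 - eps))
  (* (ii) *)
  (Hmean : exists C N, forall n, (N <= n)%nat ->
              Rabs (EY p (S n) - EY p n - alpha) <= C * Rabs (delta n))
  (* (iii) *)
  (Hconc : exists C N, forall n, (N <= n)%nat ->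
              devY p alpha (delta n) n <= C * Rpower (INR n) (-2 - eps)) :
  (* E X_n < infinity for every n (in particular X_n is a.s. finite) *)
  (forall n, (1 <= n)%nat ->
     infinite_sum (pmfX p n) 1 /\
     exists e, infinite_sum (fun t => INR t * pmfX p n t) e) /\
  (* E X_{n+1} - E X_n = O(1/n) *)
  (exists EX : nat -> R,
     (forall n, (1 <= n)%nat -> infinite_sum (fun t => INR t * pmfX p n t) (EX n)) /\
     exists C N, forall n, (1 <= n)%nat -> (N <= n)%nat ->
       Rabs (EX (S n) - EX n) <= C / INR n) /\
  (* d_W(X_n, X_m) = O(|n-m| / min(n,m)) uniformly in n, m >= 1 *)
  (exists C, forall n m, (1 <= n)%nat -> (1 <= m)%nat ->
     wass_le (pmfX p n) (pmfX p m)
             (C * Rabs (INR n - INR m) / INR (Nat.min n m))).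
Proof.
  destruct (mean_sequence p Hnonneg Hsupp Hmass Hnotn) as [EX HEX].
  pose proof (fun n Hn => law_and_mean p Hnonneg Hsupp Hmass Hnotn n (EX n) Hn (HEX n Hn)) as Hlaw.
  destruct (dmean_scaled_bound p Hnonneg Hsupp Hmass Hnotn Hmono alpha eps delta
              Halpha Heps Hdelta Hmean Hconc) as [K [HK HD]].
  split; [| split].
  - intros n Hn. split; [apply Hlaw; auto | exists (EX n); apply Hlaw; auto].
  - exists EX. split; [intros n Hn; apply Hlaw; auto |].
    exists K, 0%nat. intros n Hn _. apply (mean_increment_bound p Hsupp Hmass Hmono EX K); auto.
  - exists K. apply (wasserstein_bound p Hnonneg Hsupp Hmass Hnotn Hmono K HK HD).
Qed.
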